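(* Let $\Phi:\mathbb{C}^2\to\mathbb{C}^3$ be the cross cap $\Phi(s,t)=(s^2,st,t)$. Then $\Omega_{\mathbb{C}}(\Phi)=[u]$.
   Context: For a holomorphic germ $\Phi:(\mathbb{C}^2,0)\to(\mathbb{C}^3,0)$ with $\operatorname{rank} d\Phi_z=2$ for $z\neq0$, the complex Smale invariant $\Omega_{\mathbb{C}}(\Phi)$ is the homotopy class of $d\Phi|_{S^3}:S^3\to V_2(\mathbb{C}^3)$ (complex Stiefel manifold of 2-frames in $\mathbb{C}^3$, via the standard trivializations of $T\mathbb{C}^2$, $T\mathbb{C}^3$), viewed in $\pi_3(V_2(\mathbb{C}^3))\cong\pi_3(U(3))\cong\pi_3(U)$ (the first isomorphism induced by the projection $U(3)\to V_2(\mathbb{C}^3)$). $u:S^3\to U(2)\subset U$ is $u_q=\begin{pmatrix}z&-\bar w\\ w&\bar z\end{pmatrix}$ for the unit quaternion $q=z+wj$, with $\mathbb{C}^2\cong\mathbb{H}$ via $(z,w)\leftrightarrow z+wj$; $[u]$ generates $\pi_3(U)$. *)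

From HB Require Import structures.
From mathcomp Require Import all_boot all_order all_algebra.
From mathcomp Require Import all_classical all_reals topology normedtype.
From mathcomp Require Import complex.
Set Implicit Arguments. Unset Strict Implicit. Unset Printing Implicit Defensive.
Import Order.TTheory GRing.Theory Num.Theory.
Import numFieldNormedType.Exports.
Local Open Scope ring_scope.
Local Open Scope classical_set_scope.

Section Defs.
Variable R : realType.
Local Notation C := (complex R).

(** The unit sphere S^3 in C^2 = R^4, real coordinates x = (Re z, Im z, Re w, Im w). *)
Definition S3 : set 'rV[R]_4 := [set x | \sum_(i < 4) x 0 i ^+ 2 = 1].

Definition zcoord (x : 'rV[R]_4) : C := (x 0 0 +i* x 0 1)%C.
Definition wcoord (x : 'rV[R]_4) : C := (x 0 2 +i* x 0 3)%C.

(** Real coordinates of a complex 3x2 matrix, used to topologize frames. *)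
Definition realify (A : 'M[C]_(3, 2)) : 'M[R]_(3, 2) * 'M[R]_(3, 2) :=
  (map_mx (@complex.Re R) A, map_mx (@complex.Im R) A).

(** (Non-compact) complex Stiefel manifold V_2(C^3): 3x2 complex matrices of
    rank 2, i.e. injective C-linear maps C^2 -> C^3 (pairs of C-independent
    column vectors). *)
Definition V2C3 : set 'M[C]_(3, 2) := [set A | \rank A = 2%N].

Definition homotopic_S3_V2 (f g : 'rV[R]_4 -> 'M[C]_(3, 2)) : Prop :=
  exists H : R -> 'rV[R]_4 -> 'M[C]_(3, 2),
    [/\ {within [set p : R * 'rV[R]_4 | 0 <= p.1 <= 1 /\ S3 p.2],
           continuous (fun p => realify (H p.1 p.2))},
        (forall t x, 0 <= t <= 1 -> S3 x -> V2C3 (H t x)),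
        (forall x, S3 x -> H 0 x = f x) &
        (forall x, S3 x -> H 1 x = g x)].

(** Cross cap Phi(s,t) = (s^2, s t, t); its Jacobian matrix (columns
    dPhi/ds, dPhi/dt) in the standard trivializations. *)
Definition crosscap (s t : C) : C * C * C := (s ^+ 2, s * t, t).

Definition dcrosscap (s t : C) : 'M[C]_(3, 2) :=
  \matrix_(i < 3, j < 2)
    match nat_of_ord i, nat_of_ord j with
    | 0, 0 => 2%:R * s | 0, _ => 0
    | 1, 0 => t        | 1, _ => s
    | _, 0 => 0        | _, _ => 1
    end.

(** The complex Smale invariant representative: dPhi restricted to S^3. *)
Definition smale_map_crosscap (x : 'rV[R]_4) : 'M[C]_(3, 2) :=
  dcrosscap (zcoord x) (wcoord x).

(** u_q = [[z, -conj w], [w, conj z]] in U(2) ⊂ U(3) (upper-left block),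
    composed with the projection U(3) -> V_2(C^3) (first two columns). *)
Definition u_frame (x : 'rV[R]_4) : 'M[C]_(3, 2) :=
  let z := zcoord x in let w := wcoord x in
  \matrix_(i < 3, j < 2)
    match nat_of_ord i, nat_of_ord j with
    | 0, 0 => z | 0, _ => - (w^*)%C
    | 1, 0 => w | 1, _ => (z^*)%C
    | _, _ => 0
    end.

End Defs.

From HB Require Import structures.
From mathcomp Require Import all_boot all_order all_algebra.
From mathcomp Require Import all_classical all_reals topology normedtype.
From mathcomp Require Import complex.
From mathcomp Require Import ring lra.
Set Implicit Arguments. Unset Strict Implicit. Unset Printing Implicit Defensive.
Import Order.TTheory GRing.Theory Num.Theory.
Import numFieldNormedType.Exports.
Local Open Scope ring_scope.
Local Open Scope classical_set_scope.

(* The straight-line homotopy H_t = (1 - t) dPhi + t u stays in V_2(C^3):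
   H_t = [[(2 - t) z, -t conj w], [w, (1 - t) z + t conj z], [0, 1 - t]],
   so for t < 1 the 2x2 minors on rows {1,2} and {0,2} are (1 - t) w and
   (2 - t)(1 - t) z, which cannot both vanish on S^3, while H_1 = u is unitary
   on S^3. *)

Lemma mx_continuous (T : topologicalType) (U : puniformType) m n
    (f : T -> 'M[U]_(m, n)) :
  (forall i j, continuous (fun x => f x i j)) -> continuous f.
Proof.
move=> fc x; apply/cvg_mx_entourageP => A entA.
apply: (@filter_forall _ _ (fun i y => forall j, (f x i j, f y i j) \in A)) => i.
apply: (@filter_forall _ _ (fun j y => (f x i j, f y i j) \in A)) => j.
have /cvg_entourageP/(_ A entA) := fc i j x.
by rewrite near_simpl; apply: filterS => y; rewrite inE.
Qed.

Section ComplexContinuity.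
Variables (R : realType) (T : topologicalType).
Implicit Types f g : T -> R[i].

Definition continuous_complex f :=
  continuous (fun x => complex.Re (f x)) /\ continuous (fun x => complex.Im (f x)).

Lemma continuous_complex_cst (c : R[i]) : continuous_complex (fun=> c).
Proof. by split=> x; apply: cvg_cst. Qed.

Lemma continuous_complex_real (r : T -> R) :
  continuous r -> continuous_complex (fun x => (r x)%:C%C).
Proof. by split=> // x; apply: cvg_cst. Qed.

Lemma continuous_complexD f g : continuous_complex f -> continuous_complex g ->
  continuous_complex (fun x => f x + g x).
Proof.
move=> [f1 f2] [g1 g2]; split=> x.
- have -> : (fun x => complex.Re (f x + g x)) =
            (fun x => complex.Re (f x) + complex.Re (g x)).
    by apply/funext => y; case: (f y) => [? ?]; case: (g y).
  exact: continuousD (f1 x) (g1 x).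
- have -> : (fun x => complex.Im (f x + g x)) =
            (fun x => complex.Im (f x) + complex.Im (g x)).
    by apply/funext => y; case: (f y) => [? ?]; case: (g y).
  exact: continuousD (f2 x) (g2 x).
Qed.

Lemma continuous_complexM f g : continuous_complex f -> continuous_complex g ->
  continuous_complex (fun x => f x * g x).
Proof.
move=> [f1 f2] [g1 g2]; split=> x.
- have -> : (fun x => complex.Re (f x * g x)) = (fun x =>
      complex.Re (f x) * complex.Re (g x) - complex.Im (f x) * complex.Im (g x)).
    by apply/funext => y; case: (f y) => [? ?]; case: (g y).
  exact: continuousB (continuousM (f1 x) (g1 x)) (continuousM (f2 x) (g2 x)).
- have -> : (fun x => complex.Im (f x * g x)) = (fun x =>
      complex.Re (f x) * complex.Im (g x) + complex.Im (f x) * complex.Re (g x)).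
    by apply/funext => y; case: (f y) => [? ?]; case: (g y).
  exact: continuousD (continuousM (f1 x) (g2 x)) (continuousM (f2 x) (g1 x)).
Qed.

Lemma continuous_complexN f : continuous_complex f ->
  continuous_complex (fun x => - f x).
Proof.
move=> [f1 f2]; split=> x.
- have -> : (fun x => complex.Re (- f x)) = (fun x => - complex.Re (f x)).
    by apply/funext => y; case: (f y).
  exact: continuousN (f1 x).
- have -> : (fun x => complex.Im (- f x)) = (fun x => - complex.Im (f x)).
    by apply/funext => y; case: (f y).
  exact: continuousN (f2 x).
Qed.

Lemma continuous_complexJ f : continuous_complex f ->
  continuous_complex (fun x => (f x)^*%C).
Proof.
move=> [f1 f2]; split=> x.
- have -> : (fun x => complex.Re (f x)^*%C) = (fun x => complex.Re (f x)).
    by apply/funext => y; case: (f y).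
  exact: f1 x.
- have -> : (fun x => complex.Im (f x)^*%C) = (fun x => - complex.Im (f x)).
    by apply/funext => y; case: (f y).
  exact: continuousN (f2 x).
Qed.

End ComplexContinuity.

Lemma continuous_complex_comp (R : realType) (S T : topologicalType)
    (h : S -> T) (f : T -> R[i]) :
  continuous h -> continuous_complex f -> continuous_complex (f \o h).
Proof.
move=> hc [f1 f2]; split=> x.
- exact: continuous_comp (hc x) (f1 _).
- exact: continuous_comp (hc x) (f2 _).
Qed.

Lemma det_mx22 (F : comNzRingType) (M : 'M[F]_2) :
  \det M = M 0 0 * M 1 1 - M 0 1 * M 1 0.
Proof.
rewrite (expand_det_row _ 0) !big_ord_recl big_ord0 addr0 /cofactor.
rewrite !det_mx11 !mxE /= expr0 expr1 mul1r mulN1r mulrN.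
have -> : lift 0 0 = 1 :> 'I_2 by apply/val_inj.
by have -> : lift 1 0 = 0 :> 'I_2 by apply/val_inj.
Qed.

Lemma mxrank2_minor (F : fieldType) m (A : 'M[F]_(m, 2)) (i j : 'I_m) :
  A i 0 * A j 1 - A i 1 * A j 0 != 0 -> \rank A = 2%N.
Proof.
move=> minor_neq0.
pose rows (k : 'I_2) := if val k == 0%N then i else j.
have rank_rows : \rank (rowsub rows A) = 2%N.
  by apply: mxrank_unit; rewrite unitmxE unitfE det_mx22 !mxE.
apply/eqP; rewrite eqn_leq rank_leq_col /= -[X in (X <= _)%N]rank_rows.
exact: mxrankS (rowsub_sub rows A).
Qed.

Section SegmentHomotopy.
Variables (R : realType) (X : Type) (m n : nat).
Implicit Types f g : X -> 'M[R[i]]_(m, n).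

Definition segment_homotopy f g (t : R) (x : X) : 'M[R[i]]_(m, n) :=
  (1 - t)%:C%C *: f x + t%:C%C *: g x.

Lemma segment_homotopy0 f g x : segment_homotopy f g 0 x = f x.
Proof. by rewrite /segment_homotopy subr0 scale1r scale0r addr0. Qed.

Lemma segment_homotopy1 f g x : segment_homotopy f g 1 x = g x.
Proof. by rewrite /segment_homotopy subrr scale0r scale1r add0r. Qed.

End SegmentHomotopy.

Lemma continuous_realify (R : realType) (X : topologicalType)
    (F : X -> 'M[R[i]]_(3, 2)) :
  (forall i j, continuous_complex (fun x => F x i j)) ->
  continuous (fun x => realify (F x)).
Proof.
move=> Fc.
have re_cont : continuous (fun x => map_mx (@complex.Re R) (F x)).
  apply: mx_continuous => i j.
  have -> : (fun x => map_mx (@complex.Re R) (F x) i j) = (fun x => complex.Re (F x i j)).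
    by apply/funext => ?; rewrite mxE.
  exact: (Fc i j).1.
have im_cont : continuous (fun x => map_mx (@complex.Im R) (F x)).
  apply: mx_continuous => i j.
  have -> : (fun x => map_mx (@complex.Im R) (F x) i j) = (fun x => complex.Im (F x i j)).
    by apply/funext => ?; rewrite mxE.
  exact: (Fc i j).2.
by move=> x; apply: cvg_pair (re_cont x) (im_cont x).
Qed.

Lemma continuous_complex_segment_homotopy (R : realType) (X : topologicalType) m n
    (f g : X -> 'M[R[i]]_(m, n)) (i : 'I_m) (j : 'I_n) :
  (forall i j, continuous_complex (fun x => f x i j)) ->
  (forall i j, continuous_complex (fun x => g x i j)) ->
  continuous_complex (fun p : R * X => segment_homotopy f g p.1 p.2 i j).
Proof.
move=> fc gc.
have -> : (fun p : R * X => segment_homotopy f g p.1 p.2 i j) =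
    (fun p => (1 - p.1)%:C%C * f p.2 i j + p.1%:C%C * g p.2 i j).
  by apply/funext => p; rewrite !mxE.
have fst_cont : continuous (fun p : R * X => p.1) by move=> p; exact: cvg_fst.
have snd_cont : continuous (fun p : R * X => p.2) by move=> p; exact: cvg_snd.
apply: continuous_complexD; apply: continuous_complexM.
- by apply: continuous_complex_real => p; exact: continuousB (cvg_cst _) (fst_cont p).
- exact: continuous_complex_comp snd_cont (fc i j).
- exact: continuous_complex_real.
- exact: continuous_complex_comp snd_cont (gc i j).
Qed.

Section Crosscap.
Variable R : realType.
Implicit Types x : 'rV[R]_4.

Lemma continuous_complex_zcoord : continuous_complex (@zcoord R).
Proof. by split; apply: coord_continuous. Qed.

Lemma continuous_complex_wcoord : continuous_complex (@wcoord R).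
Proof. by split; apply: coord_continuous. Qed.

Ltac solve_continuous_complex := repeat first
  [ apply: continuous_complex_cst | apply: continuous_complexD
  | apply: continuous_complexM | apply: continuous_complexN
  | apply: continuous_complexJ | apply: continuous_complex_zcoord
  | apply: continuous_complex_wcoord ].

(* Keep entries stated in terms of [zcoord], [wcoord] and [conjc], so that
   [solve_continuous_complex] applies after the matrix entries are computed. *)
#[local] Arguments zcoord : simpl never.
#[local] Arguments wcoord : simpl never.
#[local] Arguments conjc : simpl never.

Lemma continuous_complex_smale_map_crosscap i j :
  continuous_complex (fun x => smale_map_crosscap x i j).
Proof.
rewrite /smale_map_crosscap /dcrosscap; under eq_fun do rewrite mxE.
by case: i => [[|[|[|?]]] ?] //; case: j => [[|[|?]] ?] //=; solve_continuous_complex.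
Qed.

Lemma continuous_complex_u_frame i j :
  continuous_complex (fun x => u_frame x i j).
Proof.
rewrite /u_frame; under eq_fun do rewrite mxE.
by case: i => [[|[|[|?]]] ?] //; case: j => [[|[|?]] ?] //=; solve_continuous_complex.
Qed.

Lemma S3_normE x : S3 x ->
  zcoord x * (zcoord x)^*%C + wcoord x * (wcoord x)^*%C = 1.
Proof.
rewrite /S3 /= !big_ord_recl big_ord0 addr0 => sum1.
apply/eqP; rewrite eq_complex /=; apply/andP; split; apply/eqP; last by ring.
rewrite -{}sum1 !expr2.
have -> : lift ord0 ord0 = 1 :> 'I_4 by apply/val_inj.
have -> : lift ord0 (lift ord0 ord0) = 2 :> 'I_4 by apply/val_inj.
have -> : lift ord0 (lift ord0 (lift ord0 ord0)) = 3 :> 'I_4 by apply/val_inj.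
ring.
Qed.

Local Notation crosscap_homotopy :=
  (segment_homotopy (@smale_map_crosscap R) (@u_frame R)).

Lemma crosscap_homotopy_minor02 t x :
  let H := crosscap_homotopy t x in
  H 0 0 * H 2 1 - H 0 1 * H 2 0 = ((2 - t) * (1 - t))%:C%C * zcoord x.
Proof. by rewrite /= !mxE /= !rmorphM !rmorphB /=; ring. Qed.

Lemma crosscap_homotopy_minor12 t x :
  let H := crosscap_homotopy t x in
  H 1 0 * H 2 1 - H 1 1 * H 2 0 = (1 - t)%:C%C * wcoord x.
Proof. by rewrite /= !mxE /= !rmorphB /=; ring. Qed.

Lemma rank_u_frame x : S3 x -> \rank (u_frame x) = 2%N.
Proof.
move=> /S3_normE norm1; apply: (@mxrank2_minor _ _ _ 0 1); rewrite !mxE /=.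
rewrite (_ : _ - _ = zcoord x * (zcoord x)^*%C + wcoord x * (wcoord x)^*%C); last by ring.
by rewrite norm1 oner_eq0.
Qed.

Lemma rank_crosscap_homotopy t x :
  0 <= t <= 1 -> S3 x -> \rank (crosscap_homotopy t x) = 2%N.
Proof.
move=> /andP[t_ge0 t_le1] S3x.
have [->|t_neq1] := eqVneq t 1; first by rewrite segment_homotopy1 rank_u_frame.
have one_sub_t_neq0 : (1 - t)%:C%C != 0 :> R[i].
  by rewrite fmorph_eq0 subr_eq0 eq_sym.
have [w0|w_neq0] := eqVneq (wcoord x) 0.
- apply: (@mxrank2_minor _ _ _ 0 2); rewrite crosscap_homotopy_minor02 rmorphM.
  have z_neq0 : zcoord x != 0.
    apply/eqP => z0; have := S3_normE S3x.
    by rewrite z0 w0 !mul0r addr0 => /eqP; rewrite eq_sym oner_eq0.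
  have two_sub_t_neq0 : 2 - t != 0 by apply/eqP => ?; lra.
  by rewrite !mulf_neq0 // fmorph_eq0.
- apply: (@mxrank2_minor _ _ _ 1 2).
  by rewrite crosscap_homotopy_minor12 mulf_neq0.
Qed.

End Crosscap.

Theorem proposition4p6 (R : realType) :
  homotopic_S3_V2 (@smale_map_crosscap R) (@u_frame R).
Proof.
exists (segment_homotopy (@smale_map_crosscap R) (@u_frame R)); split.
- apply: continuous_subspaceT; apply: continuous_realify => i j.
  apply: continuous_complex_segment_homotopy.
  + exact: continuous_complex_smale_map_crosscap.
  + exact: continuous_complex_u_frame.
- by move=> t x; apply: rank_crosscap_homotopy.
- by move=> x _; apply: segment_homotopy0.
- by move=> x _; apply: segment_homotopy1.
Qed.
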